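(* Let $G=(V,E)$ be an undirected, unweighted, connected graph on $N$ vertices and let $u\in V$. Then $$\min\{\mathsf{fp}_{r=1}^{\mathrm{dB}}(G,\{u\}),\ \mathsf{fp}_{r=1}^{\mathrm{Bd}}(G,\{u\})\}\le 1/N.$$
   Context: Mixed $\delta$-updating on a connected undirected unweighted graph: each vertex holds a mutant (fitness $r$) or wild-type (fitness $1$); $f_S(u)$ is the fitness at $u$ when $S$ is the mutant set. At each step, with probability $\delta$ a death-Birth step: choose $v$ uniformly to die, choose a neighbor $u$ of $v$ with probability proportional to $f_S(u)$, $u$ copies its type onto $v$; with probability $1-\delta$ a Birth-death step: choose $u$ with probability proportional to $f_S(u)$ among all vertices, choose a uniformly random neighbor $v$ of $u$, $u$ copies its type onto $v$. $\mathsf{fp}_r^\delta(G,S_0)$ is the probability all vertices eventually become mutant from initial mutant set $S_0$; $\delta=\mathrm{dB}$ means $\delta=1$ and $\delta=\mathrm{Bd}$ means $\delta=0$. *)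

From HB Require Import structures.
From mathcomp Require Import all_boot all_order all_algebra.
From mathcomp Require Import all_classical all_reals all_analysis.
Set Implicit Arguments. Unset Strict Implicit. Unset Printing Implicit Defensive.
Import Order.TTheory GRing.Theory Num.Theory numFieldNormedType.Exports.
Local Open Scope ring_scope.

Section MixedUpdating.
Variables (R : realType) (T : finType) (e : rel T).
(* e : adjacency relation of the graph (symmetric, irreflexive) *)
Variables (r delta : R).

Definition fitness (S : {set T}) (w : T) : R := if w \in S then r else 1.

(* u copies its type onto v *)
Definition reproduce (S : {set T}) (u v : T) : {set T} :=
  if u \in S then v |: S else S :\ v.

Definition deg (u : T) : R := #|[set w | e u w]|%:R.

Definition trans (S S' : {set T}) : R :=
  delta * (\sum_(v : T) \sum_(u : T | e v u)
     (#|T|%:R)^-1 * (fitness S u / (\sum_(w : T | e v w) fitness S w))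
       * (reproduce S u v == S')%:R)
  + (1 - delta) * (\sum_(u : T) \sum_(v : T | e u v)
     (fitness S u / (\sum_(w : T) fitness S w)) * (deg u)^-1
       * (reproduce S u v == S')%:R).

Fixpoint hitprob (n : nat) (S : {set T}) : R :=
  if S == [set: T] then 1 else
  match n with
  | 0 => 0
  | n'.+1 => \sum_(S' : {set T}) trans S S' * hitprob n' S'
  end.

Definition fp (S0 : {set T}) : R := limn (fun n => hitprob n S0).

End MixedUpdating.

From HB Require Import structures.
From mathcomp Require Import all_boot all_order all_algebra.
From mathcomp Require Import all_classical all_reals all_analysis.
From mathcomp Require Import ring lra.
Set Implicit Arguments. Unset Strict Implicit. Unset Printing Implicit Defensive.
Import Order.TTheory GRing.Theory Num.Theory numFieldNormedType.Exports.
Local Open Scope ring_scope.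

(* Under neutral drift (r = 1) a weighted mutant count  W_p(S) = sum_(v in S) p v
   is preserved in expectation by one step of the chain as soon as the weights
   make the flow across every edge cancel: p = deg / sum deg for death-Birth and
   p = deg^-1 / sum deg^-1 for Birth-death.  Such a W_p is nonnegative and equal
   to 1 on the all-mutant state, so by induction it bounds every finite-horizon
   hitting probability, hence the fixation probability:
     fp^dB({u}) <= d_u / sum d     and     fp^Bd({u}) <= d_u^-1 / sum d^-1.
   The product of the two bounds is 1 / (sum d * sum d^-1) <= 1 / N^2 by
   Cauchy-Schwarz, so the smaller one is at most 1 / N. *)

Lemma sumr_gt0 (R : numDomainType) (I : finType) (F : I -> R) :
  (0 < #|I|)%N -> (forall i, 0 < F i) -> 0 < \sum_i F i.
Proof.
move=> /card_gt0P[i _] F_gt0; rewrite (bigD1 i) //=.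
by rewrite ltr_pwDl // sumr_ge0 // => j _; apply: ltW.
Qed.

Lemma sum_indicator_eq (R : pzSemiRingType) (I : finType) (X : I) (g : I -> R) :
  \sum_(Y : I) (X == Y)%:R * g Y = g X.
Proof.
under eq_bigr do rewrite mulr_natl mulrb.
by rewrite -big_mkcond (big_pred1 X) // => Y; rewrite eq_sym.
Qed.

Lemma sqr_card_le_sum_mul_sum_inv (R : realFieldType) (I : finType) (F : I -> R) :
  (forall i, 0 < F i) -> #|I|%:R ^+ 2 <= (\sum_i F i) * (\sum_i (F i)^-1).
Proof.
move=> F_gt0.
have amgm (x y : R) : 0 < x -> 0 < y -> 2 <= x / y + y / x.
  move=> x_gt0 y_gt0; rewrite -subr_ge0.
  have -> : x / y + y / x - 2 = (x - y) ^+ 2 / (x * y) by field; rewrite !gt_eqF.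
  by rewrite divr_ge0 ?sqr_ge0 // mulr_ge0 ?ltW.
have expand : (\sum_i F i) * (\sum_i (F i)^-1) = \sum_i \sum_j F i / F j.
  by rewrite mulr_suml; apply: eq_bigr => i _; rewrite mulr_sumr.
have symmetrize : \sum_i \sum_j (F i / F j + F j / F i) =
                  2 * ((\sum_i F i) * (\sum_i (F i)^-1)).
  under eq_bigr do rewrite big_split /=.
  by rewrite big_split /= [X in _ + X]exchange_big -expand mulr_natl mulr2n.
have pairwise : \sum_(i : I) \sum_(j : I) (2 : R) <= \sum_i \sum_j (F i / F j + F j / F i).
  by do 2!(apply: ler_sum => ? _); apply: amgm.
by rewrite symmetrize !sumr_const -mulrnA -(mulr_natr 2) natrM ler_pM2l in pairwise.
Qed.

Lemma min_le_of_mul_le_sqr (R : realDomainType) (a b c : R) :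
  0 <= a -> 0 <= b -> 0 <= c -> a * b <= c ^+ 2 -> Num.min a b <= c.
Proof.
move=> a_ge0 b_ge0 c_ge0 ab_le; rewrite ge_min; case: (lerP a c) => [// | ca] /=.
by rewrite expr2 in ab_le; nra.
Qed.

Lemma trans_ge0 (R : realType) (T : finType) (e : rel T) (r delta : R) S S' :
  0 <= r -> 0 <= delta <= 1 -> 0 <= trans e r delta S S'.
Proof.
move=> r_ge0 /andP[delta_ge0 delta_le1].
have fitness_ge0 w : 0 <= fitness r S w by rewrite /fitness; case: ifP.
have sum_fitness_ge0 (P : pred T) : 0 <= \sum_(w | P w) fitness r S w.
  exact: sumr_ge0.
rewrite /trans; apply: addr_ge0; apply: mulr_ge0; rewrite ?subr_ge0 //;
  do 2!apply: sumr_ge0 => ? _; rewrite !mulr_ge0 ?invr_ge0 ?divr_ge0 //.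
Qed.

Lemma fp_setT (R : realType) (T : finType) (e : rel T) (r delta : R) :
  fp e r delta [set: T] = 1.
Proof.
rewrite /fp (_ : (fun n => _) = cst 1) ?lim_cst //.
by apply: funext => -[|n] /=; rewrite eqxx.
Qed.

Section HarmonicBound.
Variables (R : realType) (T : finType) (e : rel T) (r delta : R).
Hypothesis trans_ge0 : forall S S', 0 <= trans e r delta S S'.

Lemma hitprob_nondecreasing S : nondecreasing_seq (hitprob e r delta ^~ S).
Proof.
apply/nondecreasing_seqP => n; elim: n S => [|n IHn] S /=; case: ifP => // _.
  by apply: sumr_ge0 => S' _; apply: mulr_ge0 => //; case: ifP.
by apply: ler_sum => S' _; apply: ler_wpM2l.
Qed.

Variable f : {set T} -> R.
Hypothesis f_ge0 : forall S, 0 <= f S.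
Hypothesis f_setT : f [set: T] = 1.
Hypothesis f_harmonic : forall S, S != [set: T] ->
  \sum_S' trans e r delta S S' * f S' = f S.

Lemma hitprob_le_harmonic n S : hitprob e r delta n S <= f S.
Proof.
elim: n S => [|n IHn] S /=; case: ifPn => [/eqP -> | S_neqT]; rewrite ?f_setT //.
by rewrite -f_harmonic //; apply: ler_sum => S' _; apply: ler_wpM2l.
Qed.

Lemma fp_le_harmonic S : fp e r delta S <= f S.
Proof.
have hitprob_nd := hitprob_nondecreasing S.
apply: limr_le; last exact: nearW (hitprob_le_harmonic ^~ S).
apply: nondecreasing_is_cvgn => //.
by exists (f S) => _ [n _ <-]; apply: hitprob_le_harmonic.
Qed.

End HarmonicBound.

Section NeutralChain.
Variables (R : realType) (T : finType) (e : rel T).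
Hypothesis e_sym : symmetric e.
Hypothesis deg_gt0 : forall x, 0 < deg R e x.
Hypothesis T_nonempty : (0 < #|T|)%N.
Local Notation d := (deg R e).
Local Notation N := (#|T|%:R : R).

Lemma natr_card_neq0 : N != 0.
Proof. by rewrite pnatr_eq0 -lt0n. Qed.

Lemma sumr1_neighbours x : \sum_(y | e x y) (1 : R) = d x.
Proof. by rewrite sumr_const /deg cardsE. Qed.

Lemma sum_edges_antisym (g : T -> T -> R) (a : T -> R) :
  (forall x y, g x y = g y x) ->
  \sum_x \sum_(y | e x y) g x y * (a y - a x) = 0.
Proof.
move=> g_sym.
have edge_swap (h : T -> T -> R) :
    \sum_x \sum_(y | e x y) h x y = \sum_x \sum_(y | e x y) h y x.
  rewrite (exchange_big_dep xpredT) //=.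
  by apply: eq_bigr => x _; apply: eq_bigl => y; rewrite e_sym.
under eq_bigr do under eq_bigr do rewrite mulrBr.
under eq_bigr do rewrite sumrB.
rewrite sumrB edge_swap.
by under eq_bigr do under eq_bigr do rewrite g_sym; rewrite subrr.
Qed.

Lemma fitness_neutral (S : {set T}) : fitness (1 : R) S = fun=> 1.
Proof. by apply: funext => w; rewrite /fitness if_same. Qed.

(* In the dB term x dies and is replaced by its neighbour y; in the Bd term
   x reproduces onto its neighbour y. *)
Lemma neutral_step_mean delta S (F : {set T} -> R) :
  \sum_S' trans e 1 delta S S' * F S' =
    delta * \sum_x \sum_(y | e x y) (N * d x)^-1 * F (reproduce S y x)
  + (1 - delta) * \sum_x \sum_(y | e x y) (N * d x)^-1 * F (reproduce S x y).
Proof.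
have pull (c : T -> T -> R) (g : T -> T -> {set T}) :
    \sum_S' (\sum_x \sum_(y | e x y) c x y * (g x y == S')%:R) * F S' =
    \sum_x \sum_(y | e x y) c x y * F (g x y).
  under eq_bigr do rewrite mulr_suml; rewrite exchange_big; apply: eq_bigr => x _.
  under eq_bigr do rewrite mulr_suml; rewrite exchange_big; apply: eq_bigr => y _.
  by under eq_bigr do rewrite -mulrA; rewrite -mulr_sumr sum_indicator_eq.
rewrite /trans fitness_neutral.
under eq_bigr do rewrite mulrDl -!mulrA.
rewrite big_split /= -!mulr_sumr !pull.
congr (_ * _ + _ * _); apply: eq_bigr => x _; apply: eq_bigr => y _; congr (_ * _).
  by rewrite sumr1_neighbours mul1r invfM.
by rewrite sumr_const mul1r invfM.
Qed.

Lemma neighbour_average (K : R) (c : T -> T -> R) :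
  \sum_x \sum_(y | e x y) (N * d x)^-1 * (K + c x y) =
  K + \sum_x \sum_(y | e x y) (N * d x)^-1 * c x y.
Proof.
under eq_bigr do under eq_bigr do rewrite mulrDr.
under eq_bigr do rewrite big_split /=.
rewrite big_split /=; congr (_ + _).
have const_part x : \sum_(y | e x y) (N * d x)^-1 * K = K / N.
  rewrite -[_ * K]mulr1 -mulr_sumr sumr1_neighbours.
  by field; rewrite natr_card_neq0 (gt_eqF (deg_gt0 x)).
rewrite (eq_bigr _ (fun x _ => const_part x)) sumr_const -(mulr_natr (K / N)).
(* [sumr_const] counts [#|xpredT|], which is only convertible to [#|T|] *)
by rewrite cardT divfK // -cardT natr_card_neq0.
Qed.

Definition weighted_count (p : T -> R) (S : {set T}) : R := \sum_(v in S) p v.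

Lemma weighted_count_ge0 p S : (forall v, 0 <= p v) -> 0 <= weighted_count p S.
Proof. by move=> p_ge0; apply: sumr_ge0. Qed.

Lemma weighted_count_set1 p u : weighted_count p [set u] = p u.
Proof. exact: big_set1. Qed.

Lemma weighted_count_setT p : weighted_count p [set: T] = \sum_v p v.
Proof. by apply: eq_bigl => v; rewrite inE. Qed.

Lemma weighted_count_reproduce p S u v :
  weighted_count p (reproduce S u v) =
  weighted_count p S + p v * ((u \in S)%:R - (v \in S)%:R).
Proof.
rewrite /weighted_count /reproduce; case: ifP => uS; have [vS|vS] := boolP (v \in S).
- have -> : v |: S = S by apply/finset.setUidPr; rewrite finset.sub1set.
  by rewrite subrr mulr0 addr0.
- by rewrite big_setU1 //= subr0 mulr1 addrC.
- by rewrite (big_setD1 v vS) /=; lra.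
- have -> : S :\ v = S by apply/finset.setDidPl; rewrite disjoint_sym disjoints1.
  by rewrite subrr mulr0 addr0.
Qed.

Definition deg_weight v : R := d v / \sum_w d w.
Definition invdeg_weight v : R := (d v)^-1 / \sum_w (d w)^-1.

Lemma sum_deg_gt0 : 0 < \sum_w d w.
Proof. exact: sumr_gt0. Qed.

Lemma sum_invdeg_gt0 : 0 < \sum_w (d w)^-1.
Proof. by apply: sumr_gt0 => // w; rewrite invr_gt0. Qed.

Lemma deg_weight_ge0 v : 0 <= deg_weight v.
Proof. by rewrite divr_ge0 ?ltW ?sum_deg_gt0. Qed.

Lemma invdeg_weight_ge0 v : 0 <= invdeg_weight v.
Proof. by rewrite divr_ge0 ?ltW ?invr_gt0 ?sum_invdeg_gt0. Qed.

Lemma deg_weight_harmonic S :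
  \sum_S' trans e 1 1 S S' * weighted_count deg_weight S' =
  weighted_count deg_weight S.
Proof.
rewrite neutral_step_mean subrr mul0r addr0 mul1r.
under eq_bigr do under eq_bigr do rewrite weighted_count_reproduce.
rewrite neighbour_average -[RHS]addr0; congr (_ + _).
under eq_bigr do under eq_bigr do rewrite mulrA.
apply: (sum_edges_antisym (g := fun x _ => (N * d x)^-1 * deg_weight x)) => x y.
have weight_const v : (N * d v)^-1 * deg_weight v = (N * \sum_w d w)^-1.
  rewrite /deg_weight; field.
  by rewrite natr_card_neq0 !gt_eqF ?deg_gt0 ?sum_deg_gt0.
by rewrite !weight_const.
Qed.

Lemma invdeg_weight_harmonic S :
  \sum_S' trans e 1 0 S S' * weighted_count invdeg_weight S' =
  weighted_count invdeg_weight S.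
Proof.
rewrite neutral_step_mean subr0 mul0r add0r mul1r.
under eq_bigr do under eq_bigr do rewrite weighted_count_reproduce.
rewrite neighbour_average -[RHS]addr0; congr (_ + _).
under eq_bigr do under eq_bigr do rewrite -opprB !mulrN mulrA.
under eq_bigr do rewrite sumrN.
rewrite sumrN (sum_edges_antisym (g := fun x y => (N * d x)^-1 * invdeg_weight y)) ?oppr0 //.
move=> x y; rewrite /invdeg_weight; field.
by rewrite natr_card_neq0 !gt_eqF ?deg_gt0 ?sum_invdeg_gt0.
Qed.

Lemma fp_dB_le u : fp e 1 1 [set u] <= deg_weight u.
Proof.
rewrite -weighted_count_set1; apply: fp_le_harmonic => [S S' | S | | S _].
- by apply: trans_ge0; rewrite ?ler01 ?lexx.
- exact: weighted_count_ge0 deg_weight_ge0.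
- by rewrite weighted_count_setT -mulr_suml divff // gt_eqF ?sum_deg_gt0.
- exact: deg_weight_harmonic.
Qed.

Lemma fp_Bd_le u : fp e 1 0 [set u] <= invdeg_weight u.
Proof.
rewrite -weighted_count_set1; apply: fp_le_harmonic => [S S' | S | | S _].
- by apply: trans_ge0; rewrite ?ler01 ?lexx.
- exact: weighted_count_ge0 invdeg_weight_ge0.
- by rewrite weighted_count_setT -mulr_suml divff // gt_eqF ?sum_invdeg_gt0.
- exact: invdeg_weight_harmonic.
Qed.

Lemma deg_weight_mul_invdeg_weight_le u :
  deg_weight u * invdeg_weight u <= (1 / N) ^+ 2.
Proof.
have -> : deg_weight u * invdeg_weight u = ((\sum_w d w) * (\sum_w (d w)^-1))^-1.
  rewrite /deg_weight /invdeg_weight; field.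
  by rewrite !gt_eqF ?deg_gt0 ?sum_deg_gt0 ?sum_invdeg_gt0.
rewrite expr_div_n expr1n mul1r lef_pV2 ?posrE ?exprn_gt0 ?ltr0n //;
  last by rewrite mulr_gt0 ?sum_deg_gt0 ?sum_invdeg_gt0.
exact: sqr_card_le_sum_mul_sum_inv.
Qed.

End NeutralChain.

Lemma connected_deg_gt0 (R : realType) (T : finType) (e : rel T) :
  (forall x y, connect e x y) -> (1 < #|T|)%N -> forall x, 0 < deg R e x.
Proof.
move=> e_conn T_gt1 x.
have [y y_neq_x] : exists y, y != x.
  have [a [b [_ _ a_neq_b]]] := card_gt1P T_gt1.
  by case: (eqVneq a x) => [<- | ?]; [exists b; rewrite eq_sym | exists a].
have /connectP[[|z p] /= path_xy last_y] := e_conn x y.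
  by rewrite last_y eqxx in y_neq_x.
rewrite /deg ltr0n; apply/card_gt0P; exists z; rewrite inE.
by case/andP: path_xy.
Qed.

Theorem mainTheorem8 (R : realType) (T : finType) (e : rel T)
  (e_sym : symmetric e) (e_irr : irreflexive e)
  (e_conn : forall x y : T, connect e x y) (u : T) :
  Num.min (fp e (1 : R) 1 [set u]) (fp e (1 : R) 0 [set u])
    <= 1 / (#|T|%:R : R).
Proof.
have [T_gt1 | T_le1] := ltnP 1 #|T|; last first.
  have card_T : #|T| = 1%N.
    by apply/eqP; rewrite eqn_leq T_le1; apply/card_gt0P; exists u.
  have -> : [set u] = [set: T].
    by apply/eqP; rewrite eqEcard finset.subsetT cards1 cardsT card_T.
  by rewrite fp_setT card_T divr1 ge_min lexx.
have deg_gt0 := connected_deg_gt0 R e_conn T_gt1.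
have T_nonempty := ltnW T_gt1.
apply: le_trans (le_min2 (fp_dB_le e_sym deg_gt0 T_nonempty u)
                         (fp_Bd_le e_sym deg_gt0 T_nonempty u)) _.
apply: min_le_of_mul_le_sqr; rewrite ?deg_weight_ge0 ?invdeg_weight_ge0 ?divr_ge0 //.
exact: deg_weight_mul_invdeg_weight_le.
Qed.
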